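(* Let $K$ be a nonempty compact Hausdorff topological space and let $X$ be a real Banach space. Then $X$ has the property $( ** )$ if and only if $C(K,X)$ has the property $( ** )$.
   Context: All Banach spaces are real. For a Banach space $Z$, $B_Z$, $S_Z$ and $Z^*$ denote its closed unit ball, unit sphere and dual. For $z^*\in S_{Z^*}$ and $0<\alpha<1$, the slice is $S(z^*,\alpha)=\{z\in B_Z: z^*(z)>1-\alpha\}$, and $-S(z^*,\alpha)=\{-z: z\in S(z^*,\alpha)\}$. A Banach space $Z$ has the property $( ** )$ if for all $z_1,z_2\in S_Z$ and every $\varepsilon>0$ there exists $z^*\in S_{Z^*}$ such that, writing $S=S(z^*,\varepsilon)$, one has $z_1\in S$ and $\operatorname{dist}(z_2,S)+\operatorname{dist}(z_2,-S)<2+\varepsilon$. $C(K,X)$ is the Banach space of all continuous functions $K\to X$ with the supremum norm. *)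

From HB Require Import structures.
From mathcomp Require Import all_boot all_order all_algebra.
From mathcomp Require Import all_classical all_reals all_analysis.
Set Implicit Arguments. Unset Strict Implicit. Unset Printing Implicit Defensive.
Import Order.TTheory GRing.Theory Num.Theory.
Import numFieldNormedType.Exports.
Local Open Scope classical_set_scope.
Local Open Scope ring_scope.

(* A real normed space is presented as a linear subspace [S] of an lmodType [V]
   together with its norm [N] (only used on [S]).  This lets us treat both a
   normed module [X] (S = setT, N = norm) and the space C(K,X) of continuous
   functions (S = continuous functions inside K -> X, N = sup norm) uniformly. *)
Section StarStar.
Variables (R : realType) (V : lmodType R) (S : set V) (N : V -> R).

Definition unit_ball : set V := [set z | S z /\ N z <= 1].

Definition unit_sphere : set V := [set z | S z /\ N z = 1].

(* z* belongs to the unit sphere of the dual Z^* : it is a linear functional on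
   the space whose operator norm  sup_{z in B_Z} |z*(z)|  equals 1
   (this also forces boundedness, hence continuity). *)
Definition dual_unit_sphere (f : V -> R) : Prop :=
  (forall (a : R) (x y : V), S x -> S y -> f (a *: x + y) = a * f x + f y) /\
  ereal_sup [set (`|f z|)%:E | z in unit_ball] = 1%:E.

Definition slice (f : V -> R) (alpha : R) : set V :=
  [set z | unit_ball z /\ 1 - alpha < f z].

Definition opp_set (A : set V) : set V := [set - z | z in A].

Definition dist_to (z : V) (A : set V) : R := inf [set N (z - a) | a in A].

Definition star_star : Prop :=
  forall z1 z2 : V, unit_sphere z1 -> unit_sphere z2 ->
  forall eps : R, 0 < eps ->
  exists f : V -> R, dual_unit_sphere f /\
    slice f eps z1 /\
    dist_to z2 (slice f eps) + dist_to z2 (opp_set (slice f eps)) < 2 + eps.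

End StarStar.

Definition has_star_star (R : realType) (X : normedModType R) : Prop :=
  @star_star R X setT (fun x : X => `|x|).

Definition CKX_has_star_star (R : realType) (K : topologicalType)
  (X : normedModType R) : Prop :=
  @star_star R (K -> X)%type [set f : K -> X | continuous f]
    (fun f => sup [set `|f k| | k in [set: K]]).

From mathcomp Require Import all_boot all_order all_algebra.
From mathcomp Require Import all_classical all_reals all_analysis.
From mathcomp Require Import lra.
Set Implicit Arguments. Unset Strict Implicit. Unset Printing Implicit Defensive.
Import Order.TTheory GRing.Theory Num.Theory.
Import numFieldNormedType.Exports.
Local Open Scope classical_set_scope.
Local Open Scope ring_scope.

(* Theorem 2.1: for a nonempty compact space K and a normed space X, X has
   property (**) iff C(K,X) has it.  Property (**) is first recast in terms of witnesses: the distance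
   condition for a slice S holds iff some s, s' in S satisfy
   ||z2 - s|| + ||z2 + s'|| < 2 + eps ([slice_witnesses], [witnesses_dist]).

   C(K,X) => X: apply (**) in C(K,X) to the constant functions z1, z2 with a
   small margin e, getting phi and witnesses G, G'.  As phi (z1 + G + G') >
   3(1-e), some t has ||z1 + G t + G' t|| > 3(1-e); a Hahn-Banach functional
   norming this vector (proved first, from Zorn's lemma, for any sublinear
   majorant) then nearly attains 1 at z1, G t and G' t.

   X => C(K,X): at a point t0 where ||F1 t0|| is almost 1, apply (**) in X to
   the directions of F1 t0 and F2 t0 and use evaluation at t0.  Convexity of
   slices rescales the witnesses to F2 t0 itself, and a continuous bump at t0
   patches them into F2 at a small cost in sup-distance. *)

Section HahnBanach.
Variables (R : realType) (V : lmodType R) (p : V -> R).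
Hypothesis p_subadd : forall x y, p (x + y) <= p x + p y.
Hypothesis p_homo : forall (t : R) x, 0 <= t -> p (t *: x) = t * p x.

(* A partial linear functional dominated by [p], encoded by its graph. *)
Definition dominated_graph (A : set (V * R)) : Prop :=
  [/\ forall v r r', A (v, r) -> A (v, r') -> r = r',
      forall a v r u s, A (v, r) -> A (u, s) -> A (a *: v + u, a * r + s),
      forall v r, A (v, r) -> r <= p v & A (0, 0)].

Lemma sublinear0 : p 0 = 0.
Proof. by have := @p_homo 0 0 (lexx 0); rewrite scale0r mul0r. Qed.

Lemma sublinear_rescale s d y : 0 < s -> p (d + s *: y) = s * p (s^-1 *: d + y).
Proof.
move=> s0; rewrite -p_homo ?ltW // scalerDr scalerA mulfV ?gt_eqF //.
by rewrite scale1r.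
Qed.

Lemma dominated_graphZ {A} a {v r} : dominated_graph A -> A (v, r) -> A (a *: v, a * r).
Proof.
by case=> _ lin _ A0 Avr; have := lin a _ _ _ _ Avr A0; rewrite !addr0.
Qed.

(* The values [c] that an extension of [A] may take at a new vector [x] form
   a nonempty interval. *)
Lemma dominated_gap {A} x : dominated_graph A ->
  exists c, forall d r, A (d, r) -> r - p (d - x) <= c /\ c <= p (d + x) - r.
Proof.
case=> _ lin dom A0.
have key d r d' r' : A (d, r) -> A (d', r') -> r - p (d - x) <= p (d' + x) - r'.
  move=> Adr Adr'; have := dom _ _ (lin 1 _ _ _ _ Adr Adr').
  rewrite scale1r mul1r (_ : d + d' = (d - x) + (d' + x)); last first.
    by rewrite addrACA addNr addr0.
  by have := p_subadd (d - x) (d' + x); lra.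
pose L := [set y | exists d r, A (d, r) /\ y = r - p (d - x)].
have L0 : L !=set0 by exists (0 - p (0 - x)), 0, 0.
have Lub : has_ubound L by exists (p (0 + x) - 0) => _ [d [r [Adr ->]]]; apply: key.
exists (sup L) => d r Adr; split; first by apply: ub_le_sup => //; exists d, r.
by apply: ge_sup => // _ [d' [r' [Adr' ->]]]; apply: key.
Qed.

Section Extension.
Variables (A : set (V * R)) (x : V) (c : R).
Hypothesis gA : dominated_graph A.

Definition extend_graph : set (V * R) :=
  [set q | exists d r t, A (d, r) /\ q = (d + t *: x, r + t * c)].

Lemma extend_graph_functional : (forall r, ~ A (x, r)) ->
  forall v r r', extend_graph (v, r) -> extend_graph (v, r') -> r = r'.
Proof.
case: gA => fun_ lin _ _ x_new v r1 r2.
move=> [d1 [s1 [t1 [A1 [e1 ->]]]]] [d2 [s2 [t2 [A2 [e2 ->]]]]].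
have E : d1 + t1 *: x = d2 + t2 *: x by rewrite -e1 -e2.
have [t12|t12] := eqVneq t1 t2.
  subst t2; have d12 : d1 = d2 by apply: (addIr (t1 *: x)).
  by rewrite (fun_ _ _ _ A1 (_ : A (d1, s2))) // d12.
exfalso; apply: (x_new ((t1 - t2)^-1 * (- s1 + s2))).
have := dominated_graphZ ((t1 - t2)^-1) gA (lin (-1) _ _ _ _ A1 A2).
rewrite mulN1r scaleN1r; congr (A (_, _)).
have -> : - d1 + d2 = (t1 - t2) *: x.
  by rewrite scalerBl; apply: (addIr (t2 *: x)); rewrite subrK -addrA -E addKr.
by rewrite scalerA mulVf ?scale1r // subr_eq0.
Qed.

Lemma extend_graph_linear a v r u s : extend_graph (v, r) -> extend_graph (u, s) ->
  extend_graph (a *: v + u, a * r + s).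
Proof.
case: gA => _ lin _ _ [d1 [s1 [t1 [A1 [-> ->]]]]] [d2 [s2 [t2 [A2 [-> ->]]]]].
exists (a *: d1 + d2), (a * s1 + s2), (a * t1 + t2); split; first exact: lin.
congr (_, _); first by rewrite scalerDr scalerA addrACA scalerDl.
by rewrite mulrDr mulrA addrACA mulrDl.
Qed.

Lemma extend_graph_dominated :
  (forall d r, A (d, r) -> r - p (d - x) <= c /\ c <= p (d + x) - r) ->
  forall v r, extend_graph (v, r) -> r <= p v.
Proof.
case: gA => _ _ dom _ gap _ _ [d [r [t [Adr [-> ->]]]]].
have [t0|tn0] := eqVneq t 0; first by rewrite t0 scale0r mul0r !addr0; exact: dom.
have [tp|tn] := ltrP 0 t.
  have [_] := gap _ _ (dominated_graphZ (t^-1) gA Adr).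
  rewrite sublinear_rescale // => h; have := ler_wpM2l (ltW tp) h.
  by rewrite mulrBr mulrA mulfV // mul1r; lra.
have s0 : 0 < - t by rewrite oppr_gt0 lt_neqAle tn0 tn.
have [+ _] := gap _ _ (dominated_graphZ ((- t)^-1) gA Adr).
rewrite -[t in d + t *: x]opprK scaleNr -scalerN sublinear_rescale // => h.
have := ler_wpM2l (ltW s0) h.
by rewrite mulrBr mulrA mulfV ?gt_eqF // mul1r; lra.
Qed.

End Extension.

Lemma dominated_extend {A} x : dominated_graph A -> (forall r, ~ A (x, r)) ->
  exists A', dominated_graph A' /\ A `<` A'.
Proof.
move=> gA x_new; have [c gap] := dominated_gap x gA.
have A0 : A (0, 0) by case: gA.
exists (extend_graph A x c); split.
  split; [exact: extend_graph_functional | exact: extend_graph_linear |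
          exact: extend_graph_dominated |].
  by exists 0, 0, 0; rewrite scale0r mul0r !addr0.
split; first by case=> v r Avr; exists v, r, 0; rewrite scale0r mul0r !addr0.
move=> /(_ (x, c)) hx; apply: (x_new c); apply: hx.
by exists 0, 0, 1; rewrite scale1r mul1r !add0r.
Qed.

Definition line_graph (w : V) : set (V * R) :=
  [set q | exists t : R, q = (t *: w, t * p w)].

Lemma line_graph_dominated w : dominated_graph (line_graph w).
Proof.
split.
- move=> v r r' [t [-> ->]] [t' [e ->]].
  have /eqP : (t - t') *: w = 0 by rewrite scalerBl e subrr.
  rewrite scaler_eq0 subr_eq0 => /orP[/eqP -> //|/eqP w0].
  by rewrite w0 sublinear0 !mulr0.
- move=> a v r u s [t [-> ->]] [t' [-> ->]].
  by exists (a * t + t'); rewrite scalerDl scalerA mulrDl mulrA.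
- move=> v r [t [-> ->]]; have [t0|t0] := leP 0 t; first by rewrite p_homo.
  have := p_subadd w (- w); rewrite subrr sublinear0.
  rewrite -[t *: w]opprK -scaleNr -scalerN p_homo; last by rewrite oppr_ge0 ltW.
  by move=> h; nra.
- by exists 0; rewrite scale0r mul0r.
Qed.

(* The family to which Zorn's lemma is applied: dominated graphs through
   [(w, p w)], together with the empty graph (the union of the empty chain). *)
Definition zorn_family (w : V) (A : set (V * R)) : Prop :=
  A = set0 \/ dominated_graph A /\ A (w, p w).

Lemma zorn_family_chain w (F : set (set (V * R))) :
  F `<=` zorn_family w -> total_on F subset -> zorn_family w (\bigcup_(X in F) X).
Proof.
move=> FP Ftot.
have [[q [X0 FX0 X0q]]|Fe] := pselect ((\bigcup_(X in F) X) !=set0); last first.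
  by left; apply/seteqP; split => // q Fq; apply: Fe; exists q.
have member_good X q' : F X -> X q' -> dominated_graph X /\ X (w, p w).
  by move=> FX Xq'; case: (FP _ FX) => // X0'; rewrite X0' in Xq'.
have common X Y q1 q2 : F X -> F Y -> X q1 -> Y q2 ->
    exists2 U, F U & [/\ U q1, U q2 & dominated_graph U].
  move=> FX FY Xq1 Yq2; have [XY|YX] := Ftot _ _ FX FY.
    by exists Y => //; split => //; [exact: XY | case: (member_good _ _ FY Yq2)].
  by exists X => //; split => //; [exact: YX | case: (member_good _ _ FX Xq1)].
have [[_ _ _ X0_0] X0w] := member_good _ _ FX0 X0q.
right; split; last by exists X0.
split; last by exists X0.
- move=> v r r' [X FX Xv] [Y FY Yv].
  by have [U _ [U1 U2 [fun_ _ _ _]]] := common _ _ _ _ FX FY Xv Yv; exact: fun_ U1 U2.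
- move=> a v r u s [X FX Xv] [Y FY Yu].
  have [U FU [U1 U2 [_ lin _ _]]] := common _ _ _ _ FX FY Xv Yu.
  by exists U => //; exact: lin.
- move=> v r [X FX Xv]; have [[_ _ dom _] _] := member_good _ _ FX Xv; exact: dom.
Qed.

Theorem hahn_banach w : exists f : V -> R,
  [/\ forall a x y, f (a *: x + y) = a * f x + f y,
      forall x, f x <= p x & f w = p w].
Proof.
have [A [PA Amax]] := Zorn_bigcup (@zorn_family_chain w).
have wline : line_graph w (w, p w) by exists 1; rewrite scale1r mul1r.
have [gA Aw] : dominated_graph A /\ A (w, p w).
  case: PA => // A0; exfalso; apply: (Amax (line_graph w)).
    by rewrite A0; split => // /(_ _ wline).
  by right; split => //; exact: line_graph_dominated.
have total x : exists r, A (x, r).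
  apply: contrapT => nx.
  have [A' [gA' AA']] := dominated_extend gA (fun r Axr => nx (ex_intro _ r Axr)).
  by apply: (Amax A' AA'); right; split => //; case: AA' => + _; apply.
pose f x := projT1 (cid (total x)).
have fP x : A (x, f x) by rewrite /f; case: cid.
case: gA => fun_ lin dom _.
exists f; split => [a x y||]; first exact: fun_ (fP _) (lin a _ _ _ _ (fP x) (fP y)).
  by move=> x; exact: dom (fP x).
exact: fun_ (fP _) Aw.
Qed.

End HahnBanach.

Definition linear_on {R : realType} {V : lmodType R} (S : set V) (f : V -> R) :
    Prop :=
  forall (a : R) (x y : V), S x -> S y -> f (a *: x + y) = a * f x + f y.

Section Slices.
Variables (R : realType) (V : lmodType R) (S : set V) (N : V -> R).

Lemma linear_onD {f x y} : linear_on S f -> S x -> S y -> f (x + y) = f x + f y.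
Proof. by move=> lin Sx Sy; have := lin 1 x y Sx Sy; rewrite scale1r mul1r. Qed.

Lemma linear_onZ {f} a {x} : linear_on S f -> S 0 -> S x -> f (a *: x) = a * f x.
Proof.
move=> lin S0 Sx; have f0 : f 0 = 0.
  by have := linear_onD lin S0 S0; rewrite addr0 => h; lra.
by have := lin a x 0 Sx S0; rewrite !addr0 f0 addr0.
Qed.

Lemma dual_le1 {f z} : dual_unit_sphere S N f -> unit_ball S N z -> `|f z| <= 1.
Proof.
by move=> [_ hsup] hz; rewrite -lee_fin -hsup; apply: ereal_sup_ubound; exists z.
Qed.

Hypothesis N_ge0 : forall v, 0 <= N v.

Lemma dist_to_le z (A : set V) a : A a -> dist_to N z A <= N (z - a).
Proof.
move=> Aa; apply: ge_inf; last by exists a.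
by exists 0 => _ [b Ab <-].
Qed.

Lemma slice_witnesses f eps z1 z2 c : slice S N f eps z1 ->
  dist_to N z2 (slice S N f eps) + dist_to N z2 (opp_set (slice S N f eps)) < c ->
  exists s s', [/\ slice S N f eps s, slice S N f eps s' & N (z2 - s) + N (z2 + s') < c].
Proof.
set Sl := slice S N f eps => Sl1 hc.
pose g := c - dist_to N z2 Sl - dist_to N z2 (opp_set Sl).
have g0 : 0 < g by rewrite /g; lra.
have near_inf (A : set V) a0 : A a0 ->
    exists2 a, A a & N (z2 - a) < dist_to N z2 A + g / 2.
  move=> Aa0; have ne : [set N (z2 - a) | a in A] !=set0.
    by exists (N (z2 - a0)), a0.
  have [|_ [a Aa <-] ha] := inf_lt ne (x := dist_to N z2 A + g / 2).
    by rewrite /dist_to; lra.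
  by exists a.
have [s Ss hs] := near_inf _ _ Sl1.
have [_ [s' Ss' <-] hs'] := near_inf (opp_set Sl) _ (ex_intro2 _ _ z1 Sl1 erefl).
exists s, s'; split => //; rewrite -(opprK s'); rewrite /g in hs hs'; lra.
Qed.

Lemma witnesses_dist f eps z2 s s' c : slice S N f eps s -> slice S N f eps s' ->
  N (z2 - s) + N (z2 + s') < c ->
  dist_to N z2 (slice S N f eps) + dist_to N z2 (opp_set (slice S N f eps)) < c.
Proof.
move=> Ss Ss'; apply: le_lt_trans; apply: lerD; first exact: dist_to_le.
by rewrite -(opprK s'); apply: dist_to_le; exists s'.
Qed.

End Slices.

Section NormedSpace.
Variables (R : realType) (X : normedModType R).
Implicit Types (f : X -> R) (s u w x y z : X).

Lemma linear_on_setT f a b x y : linear_on [set: X] f ->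
  f (a *: x + b *: y) = a * f x + b * f y.
Proof. by move=> lin; rewrite lin // (linear_onZ _ lin). Qed.

Lemma norm_homo (t : R) x : 0 <= t -> `|t *: x| = t * `|x|.
Proof. by move=> t0; rewrite normrZ ger0_norm. Qed.

Lemma unit_direction y u : `|u| = 1 -> exists z, `|z| = 1 /\ y = `|y| *: z.
Proof.
move=> nu; have [->|y0] := eqVneq y 0; first by exists u; rewrite normr0 scale0r.
have ny0 : `|y| != 0 by rewrite normr_eq0.
exists (`|y|^-1 *: y); rewrite scalerA mulfV // scale1r.
by rewrite normrZ normfV normr_id mulVf.
Qed.

Lemma norming_dual f w : (forall a x y, f (a *: x + y) = a * f x + f y) ->
  (forall x, f x <= `|x|) -> f w = `|w| -> w != 0 ->
  dual_unit_sphere [set: X] (fun x => `|x|) f.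
Proof.
move=> lin fle fw w0.
have linT : linear_on [set: X] f by move=> a x y _ _; exact: lin.
split => //.
have fabs x : `|f x| <= `|x|.
  rewrite ler_norml fle andbT lerNl -mulN1r -(linear_onZ _ linT) // scaleN1r.
  by have := fle (- x); rewrite normrN.
apply/le_anti/andP; split.
  apply: ge_ereal_sup => _ [y [_ hy] <-].
  by rewrite lee_fin; exact: le_trans (fabs y) hy.
have nw0 : 0 < `|w| by rewrite normr_gt0.
apply: ereal_sup_ubound; exists (`|w|^-1 *: w).
  by split => //; rewrite normrZ normfV normr_id mulVf ?gt_eqF.
by rewrite (linear_onZ _ linT) // fw mulVf ?gt_eqF // normr1.
Qed.

Lemma slice_convex f eps a b s s' : linear_on [set: X] f ->
  0 <= a -> 0 <= b -> a + b = 1 ->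
  slice [set: X] (fun x => `|x|) f eps s -> slice [set: X] (fun x => `|x|) f eps s' ->
  slice [set: X] (fun x => `|x|) f eps (a *: s + b *: s').
Proof.
move=> lin a0 b0 ab [[_ /= ns] fs] [[_ /= ns'] fs']; split; last first.
  rewrite linear_on_setT //.
  by have [fss'|fss'] := leP (f s) (f s'); nra.
split => //=; apply: le_trans (ler_normD _ _) _.
by rewrite !normrZ !ger0_norm //; nra.
Qed.

Lemma combination_split_le (a b : R) u v w : 0 <= a -> 0 <= b ->
  `|(a - b) *: u - (a *: v + b *: w)| <= a * `|u - v| + b * `|u + w|.
Proof.
move=> a0 b0; have -> : (a - b) *: u - (a *: v + b *: w) = a *: (u - v) - b *: (u + w).
  rewrite scalerBl scalerBr scalerDr !opprD !addrA; congr (_ + _).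
  by rewrite addrAC.
by apply: le_trans (ler_normB _ _) _; rewrite !normrZ !ger0_norm.
Qed.

(* Witnesses [s], [s'] of (**) for a vector [z] give witnesses for every
   multiple [lam *: z] with [0 <= lam <= 1]: take convex combinations. *)
Lemma scaled_witnesses f eps lam z s s' : linear_on [set: X] f -> 0 <= lam <= 1 ->
  slice [set: X] (fun x => `|x|) f eps s -> slice [set: X] (fun x => `|x|) f eps s' ->
  exists p q, [/\ slice [set: X] (fun x => `|x|) f eps p,
                  slice [set: X] (fun x => `|x|) f eps q &
                  `|lam *: z - p| + `|lam *: z + q| <= `|z - s| + `|z + s'|].
Proof.
move=> lin /andP[l0 l1] Ss Ss'.
pose a := (1 + lam) / 2; pose b := (1 - lam) / 2.
have a0 : 0 <= a by rewrite /a; lra.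
have b0 : 0 <= b by rewrite /b; lra.
have lamE : lam = a - b by rewrite /a /b; lra.
exists (a *: s + b *: s'), (a *: s' + b *: s); split.
- by apply: slice_convex => //; rewrite /a /b; lra.
- by apply: slice_convex => //; rewrite /a /b; lra.
have := combination_split_le z s s' a0 b0.
have := combination_split_le z (- s') (- s) a0 b0.
rewrite -lamE !scalerN -opprD !opprK => h1 h2.
have := normr_ge0 (z - s); have := normr_ge0 (z + s'); rewrite /a /b in h1 h2 *; nra.
Qed.

End NormedSpace.

Section ContinuousFunctions.
Variables (R : realType) (K : topologicalType) (X : normedModType R).
Implicit Types (F G : K -> X) (u x : X).

Definition supn F : R := sup [set `|F k| | k in [set: K]].

Lemma bump_at F t0 (d : R) : continuous F -> 0 < d ->
  exists h : K -> R, [/\ continuous h, forall t, 0 <= h t <= 1, h t0 = 1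
                       & forall t, 0 < h t -> `|F t - F t0| < d].
Proof.
move=> cF d0; exists (fun t => Num.max 0 (1 - `|F t - F t0| / d)); split.
- move=> t; apply: (@continuous_max _ K (fun=> 0) (fun t => 1 - `|F t - F t0| / d));
    first exact: cst_continuous.
  apply: (@continuousB _ R^o K (fun=> 1)); first exact: cst_continuous.
  apply: (@continuousM R K (fun t => `|F t - F t0|) (fun=> d^-1)); last first.
    exact: cst_continuous.
  apply: continuous_comp; last exact: norm_continuous.
  by apply: continuousB; [exact: cF | exact: cst_continuous].
- move=> t; rewrite le_max lexx ge_max ler01 /= lerBlDr lerDl.
  by rewrite divr_ge0 // ltW.
- by rewrite /= subrr normr0 mul0r subr0; apply/max_idPr; exact: ler01.
- by move=> t; rewrite lt_max ltxx /= subr_gt0 ltr_pdivrMr // mul1r.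
Qed.

Variable k0 : K.

Lemma supn_ge0 F : 0 <= supn F.
Proof.
rewrite /supn; have [hs|nhs] := pselect (has_sup [set `|F k| | k in [set: K]]).
  by apply: le_trans (normr_ge0 (F k0)) _; apply: ub_le_sup; [case: hs | exists k0].
by rewrite sup_out.
Qed.

Lemma supn_le F (M : R) : (forall k, `|F k| <= M) -> supn F <= M.
Proof. by move=> h; apply: ge_sup; [exists `|F k0|, k0 | move=> _ [k _ <-]]. Qed.

Lemma supn_opp F : supn (- F) = supn F.
Proof.
by congr sup; apply/seteqP; split=> _ [k _ <-]; exists k => //=; rewrite normrN.
Qed.

Lemma supn_cst x : supn (fun=> x) = `|x|.
Proof.
rewrite /supn (_ : [set _ | k in _] = [set `|x|]) ?sup1 //.
by apply/seteqP; split=> [_ [k _ <-] //|_ ->]; exists k0.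
Qed.

Lemma patch_at F t0 u (d : R) : continuous F -> (forall t, `|F t| <= 1) ->
  `|u| <= 1 -> 0 < d ->
  exists G, [/\ continuous G, supn G <= 1, G t0 = u & supn (F - G) <= `|F t0 - u| + d].
Proof.
move=> cF F1 u1 d0; have [h [ch h01 ht0 hsupp]] := bump_at t0 cF d0.
pose G t := (1 - h t) *: F t + h t *: u.
exists G; split.
- move=> t; apply: (@continuousD _ _ _ (fun t => (1 - h t) *: F t) (fun t => h t *: u)).
    apply: continuousZ (cF t).
    by apply: (@continuousB _ R^o K (fun=> 1)); [exact: cst_continuous | exact: ch].
  by apply: continuousZ (ch t) _; exact: cst_continuous.
- apply: supn_le => t; have /andP[h0 h1] := h01 t.
  apply: le_trans (ler_normD _ _) _; rewrite !normrZ !ger0_norm ?subr_ge0 //.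
  by have := F1 t; nra.
- by rewrite /G ht0 subrr scale0r add0r scale1r.
apply: supn_le => t; have /andP[h0 h1] := h01 t.
have -> : (F - G) t = h t *: (F t - u).
  change (F t - G t = h t *: (F t - u)).
  rewrite /G scalerBl scale1r opprD opprB addrA addrCA.
  by rewrite subrr addr0 scalerBr.
rewrite normrZ ger0_norm //.
have tri : `|F t - u| <= `|F t - F t0| + `|F t0 - u|.
  by rewrite (_ : F t - u = (F t - F t0) + (F t0 - u)) ?ler_normD // addrA subrK.
have := normr_ge0 (F t0 - u); have := normr_ge0 (F t - u).
have [hp|hn] := ltrP 0 (h t); first by have := hsupp t hp; nra.
nra.
Qed.

End ContinuousFunctions.

Section CompactDomain.
Variables (R : realType) (K : topologicalType) (X : normedModType R).
Hypothesis hK : compact [set: K].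
Variable k0 : K.
Implicit Types (F G : K -> X) (f : X -> R) (x : X).
Local Notation CK := [set F : K -> X | continuous F].

Lemma le_supn F k : continuous F -> `|F k| <= supn F.
Proof.
move=> cF; apply: ub_le_sup; last by exists k.
have cN : continuous (fun k => `|F k|).
  by move=> t; apply: continuous_comp (cF t) _; exact: norm_continuous.
have := continuous_compact (continuous_subspaceT cN) hK.
by move/(compact_has_sup (ex_intro _ (`|F k|) (ex_intro2 _ _ k I erefl)))=> [].
Qed.

Lemma const_sphere x : `|x| = 1 -> unit_sphere CK (@supn R K X) (fun=> x).
Proof. by move=> x1; split; [exact: cst_continuous | rewrite /= supn_cst]. Qed.

Lemma eval_dual f t0 : dual_unit_sphere [set: X] (fun x => `|x|) f ->
  dual_unit_sphere CK (@supn R K X) (fun F => f (F t0)).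
Proof.
move=> df; case: (df) => lin _; split; first by move=> a F G _ _; exact: lin.
apply/le_anti/andP; split.
  apply: ge_ereal_sup => _ [F [cF nF] <-]; rewrite lee_fin; apply: (dual_le1 df).
  by split => //=; exact: le_trans (le_supn _ cF) nF.
case: df => _ <-; apply: ereal_sup_le => _ [y [_ y1] <-].
exists (fun=> y) => //; split; first exact: cst_continuous.
by rewrite /= supn_cst.
Qed.

Lemma dual_exceeds phi F (m : R) : dual_unit_sphere CK (@supn R K X) phi ->
  continuous F -> 0 < m -> m < phi F -> exists t, m < `|F t|.
Proof.
move=> dphi cF m0 mF; apply: contrapT => /forallNP Fle.
have cmF : continuous (m^-1 *: F).
  move=> t; apply: (@continuousZ _ _ _ (fun=> m^-1) F); last exact: cF.
  exact: cst_continuous.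
have : `|phi (m^-1 *: F)| <= 1.
  apply: (dual_le1 dphi); split => //=; apply: (supn_le k0) => t.
  rewrite /= normrZ gtr0_norm ?invr_gt0 // ler_pdivrMl // mulr1.
  by rewrite leNgt; apply/negP; exact: Fle.
case: (dphi) => lin _; rewrite (linear_onZ _ lin) //; last exact: cst_continuous.
rewrite normrM gtr0_norm ?invr_gt0 // ler_pdivrMl // mulr1.
by move=> /(le_trans (ler_norm _)); lra.
Qed.

End CompactDomain.

Lemma small_margin (R : realType) (eps : R) : 0 < eps ->
  exists e : R, [/\ 0 < e, e <= eps / 4 & e <= 1 / 2].
Proof.
move=> eps0; have [eps2|eps2] := lerP eps 2; first by exists (eps / 4); split => //; lra.
by exists (1 / 2); split => //; lra.
Qed.

Section Transfer.
Variables (R : realType) (K : topologicalType) (X : normedModType R).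
Hypothesis hK : compact [set: K].
Variable k0 : K.

(* (**) passes from C(K,X) to X: apply it to constant functions, find a point
   where the witnesses almost align with [z1], and norm that point by
   Hahn-Banach. *)
Lemma CK_to_X : CKX_has_star_star K X -> has_star_star X.
Proof.
move=> hC z1 z2 [_ nz1] [_ nz2] eps eps0.
have [e [e0 e4 e2]] := small_margin eps0.
have [phi [dphi [Sl1 dsum]]] := hC _ _ (const_sphere k0 nz1) (const_sphere k0 nz2) _ e0.
have [G [G' [[[cG /= nG] phG] [[cG' /= nG'] phG'] hGG']]] := slice_witnesses Sl1 dsum.
have Gle t : `|G t| <= 1 by apply: le_trans (le_supn hK t cG) nG.
have G'le t : `|G' t| <= 1 by apply: le_trans (le_supn hK t cG') nG'.
have cJ (x : X) : continuous (fun _ : K => x) by exact: cst_continuous.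
have cD (F H : K -> X) : continuous F -> continuous H -> continuous (F + H).
  by move=> cF cH t; apply: continuousD; [exact: cF | exact: cH].
case: (dphi) => lin _; case: Sl1 => _ phz1.
have cF : continuous ((fun=> z1) + G + G') := cD _ _ (cD _ _ (cJ z1) cG) cG'.
have [t ht] : exists t, 3 * (1 - e) < `|z1 + G t + G' t|.
  apply: (dual_exceeds k0 dphi cF); first lra.
  by rewrite !(linear_onD lin) //; [lra | exact: (cD _ _ (cJ z1) cG)].
pose w := z1 + G t + G' t.
have [f [flin fle fw]] := hahn_banach (@ler_normD _ X) (@norm_homo _ X) w.
have w0 : w != 0 by rewrite -normr_eq0 gt_eqF //; apply: lt_trans ht; lra.
have fD x y : f (x + y) = f x + f y by have := flin 1 x y; rewrite scale1r mul1r.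
have fwE : `|w| = f z1 + f (G t) + f (G' t) by rewrite -fw /w !fD.
have := fle z1; have := fle (G t); have := fle (G' t); rewrite nz1 => f1 f2 f3.
have := Gle t; have := G'le t => g1 g2.
exists f; split; first exact: norming_dual flin fle fw w0.
split; first by split; [split => //=; rewrite nz1 | lra].
apply: (witnesses_dist (fun x : X => normr_ge0 x) (s := G t) (s' := G' t)).
- by split; [split | lra].
- by split; [split | lra].
have hs : `|z2 - G t| <= supn ((fun=> z2) - G).
  apply: (le_supn hK t (F := (fun=> z2) - G)) => x.
  by apply: continuousB; [exact: cJ | exact: cG].
have hs' : `|z2 + G' t| <= supn ((fun=> z2) + G').
  by apply: (le_supn hK t (F := (fun=> z2) + G')); exact: (cD _ _ (cJ z2) cG').
rewrite /supn in hs hs'; lra.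
Qed.

(* (**) passes from X to C(K,X): near a point [t0] where [F1] almost attains
   its norm, apply (**) in X to the directions of [F1 t0] and [F2 t0], rescale
   the witnesses to [F2 t0] by convexity, and patch them into [F2] around
   [t0]; the functional is evaluation at [t0]. *)
Lemma X_to_CK : has_star_star X -> CKX_has_star_star K X.
Proof.
move=> hX F1 F2 [cF1 /= nF1] [cF2 /= nF2] eps eps0.
have [e [e0 e4 e2]] := small_margin eps0.
have F2le t : `|F2 t| <= 1 by rewrite -nF2; exact: le_supn.
have [_ [t0 _ <-] ht0] : exists2 y, [set `|F1 k| | k in [set: K]] y & 1 - e < y.
  by apply: sup_gt; [exists `|F1 k0|, k0 | rewrite nF1; lra].
have r1 : `|F1 t0| <= 1 by rewrite -nF1; exact: le_supn.
have r0 : `|F1 t0| != 0 by rewrite gt_eqF //; lra.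
pose z1 := `|F1 t0|^-1 *: F1 t0.
have nz1 : `|z1| = 1 by rewrite normrZ normfV normr_id mulVf.
have [z2 [nz2 F2z2]] := unit_direction (F2 t0) nz1.
have [f [df [Sl1 dsum]]] := hX z1 z2 (conj I nz1) (conj I nz2) e e0.
have [s [s' [Ss Ss' hss']]] := slice_witnesses Sl1 dsum.
have lam01 : 0 <= `|F2 t0| <= 1 by rewrite normr_ge0 F2le.
have [p [q [[[_ /= np] fp] [[_ /= nq] fq] hpq]]] :=
  scaled_witnesses z2 df.1 lam01 Ss Ss'.
rewrite -F2z2 in hpq.
have e20 : 0 < e / 2 by lra.
have [G [cG nG Gt0 dG]] := patch_at k0 t0 cF2 F2le np e20.
have nq' : `|- q| <= 1 by rewrite normrN.
have [H [cH nH Ht0 dH]] := patch_at k0 t0 cF2 F2le nq' e20.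
exists (fun F => f (F t0)); split; first exact: eval_dual.
case: (df) => lin _.
split.
  split; first by split => //=; rewrite nF1.
  have -> : f (F1 t0) = `|F1 t0| * f z1.
    by rewrite -(linear_onZ _ lin) // /z1 scalerA mulfV ?scale1r.
  case: Sl1 => _ fz1.
  have gap1 : 0 < `|F1 t0| - (1 - e) by lra.
  have gap2 : 0 < f z1 - (1 - e) by lra.
  by have := mulr_gt0 gap1 gap2; nra.
apply: (witnesses_dist (supn_ge0 k0) (s := G) (s' := - H)).
- by split; [split; [exact: cG | exact: nG] | rewrite /= Gt0; lra].
- split; last by change (1 - eps < f (- H t0)); rewrite Ht0 opprK; lra.
  split; last by rewrite /= supn_opp.
  by move=> x; apply: continuousN; exact: cH.
rewrite opprK in dH; change (supn (F2 - G) + supn (F2 - H) < 2 + eps); lra.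
Qed.

End Transfer.

Theorem theorem2p1 (R : realType) (K : topologicalType)
  (X : completeNormedModType R) :
  hausdorff_space K -> compact [set: K] -> [set: K] !=set0 ->
  has_star_star X <-> CKX_has_star_star K X.
Proof.
move=> _ hK [k0 _]; split; [exact: X_to_CK | exact: CK_to_X].
Qed.
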